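(* Let $M>0$, $l,p\in\mathbb N$, and $0<\lambda<\min\{1,1/\widetilde M\}$ where $\widetilde M=\sum_{j=0}^pM^j$. Consider the SigSAS state map $F^{\rm SigSAS}_{\lambda,l,p}:T^{l+1}(\mathbb R^{p+1})\times\mathbb R\to T^{l+1}(\mathbb R^{p+1})$, $F^{\rm SigSAS}_{\lambda,l,p}(\mathbf x,z)=\lambda\pi_l(\mathbf x)\otimes\widetilde{\mathbf z}+\widehat{\mathbf z}^0$, with inputs $z\in[-M,M]$. Then: (1) for all $\mathbf x_1,\mathbf x_2$ and $z\in[-M,M]$, $\|F^{\rm SigSAS}_{\lambda,l,p}(\mathbf x_1,z)-F^{\rm SigSAS}_{\lambda,l,p}(\mathbf x_2,z)\|\le\lambda\widetilde M\|\mathbf x_1-\mathbf x_2\|$, with $\lambda\widetilde M<1$; (2) with $L:=\widetilde M/(1-\lambda\widetilde M)$, $F^{\rm SigSAS}_{\lambda,l,p}$ maps $\overline{B(\mathbf 0,L)}\times[-M,M]$ into $\overline{B(\mathbf 0,L)}$; (3) the state system $\mathbf x_t=F^{\rm SigSAS}_{\lambda,l,p}(\mathbf x_{t-1},z_t)$ with inputs in $K_M=[-M,M]^{\mathbb Z_-}$ has the echo state property and the fading memory property, and its (continuous, causal, time-invariant) filter $U^{\rm SigSAS}_{\lambda,l,p}:K_M\to K_L$ is given, for $\mathbf z\in K_M$, $t\in\mathbb Z_-$, by $$U^{\rm SigSAS}_{\lambda,l,p}(\mathbf z)_t=\frac{\lambda^{l+1}}{1-\lambda}\widehat{\mathbf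 z}_t+\sum_{j=0}^{l}\lambda^j\Phi_j(\mathbf z)_t,$$ where $\Phi_j(\mathbf z)_t:=\Psi^{(j)}$ is defined recursively by $\Psi^{(0)}=\widehat{\mathbf z}^0_{t-j}$ and $\Psi^{(r)}=\pi_l(\Psi^{(r-1)})\otimes\widetilde{\mathbf z}_{t-j+r}$ for $r=1,\dots,j$ (so $\Phi_0(\mathbf z)_t=\widehat{\mathbf z}^0_t$, $\Phi_1(\mathbf z)_t=\pi_l(\widehat{\mathbf z}^0_{t-1})\otimes\widetilde{\mathbf z}_t$, etc.).
   Context: $\mathbb Z_-=\{\dots,-1,0\}$. $T^{l+1}(\mathbb R^{p+1})=(\mathbb R^{p+1})^{\otimes(l+1)}$ with canonical basis $\mathbf e_{i_1}\otimes\cdots\otimes\mathbf e_{i_{l+1}}$, $i_r\in\{1,\dots,p+1\}$ ($\mathbf e_i$ the canonical basis of $\mathbb R^{p+1}$), endowed with the Euclidean norm of the coefficient array (the norm of the inner product making the canonical basis orthonormal; a crossnorm); $B(\mathbf 0,L)$ denotes balls in this norm. The order-lowering map $\pi_l:T^{l+1}(\mathbb R^{p+1})\to T^{l}(\mathbb R^{p+1})$ is linear with $\pi_l(\sum a_{i_1\dots i_{l+1}}\mathbf e_{i_1}\otimes\cdots\otimes\mathbf e_{i_{l+1}})=\sum a_{1,i_2\dots i_{l+1}}\mathbf e_{i_2}\otimes\cdots\otimes\mathbf e_{i_{l+1}}$. For $z\in\mathbb R$, $\widetilde{\mathbf z}:=\sum_{i=1}^{p+1}z^{i-1}\mathbf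 e_i\in\mathbb R^{p+1}$; for a sequence $\mathbf z=(z_t)_{t\in\mathbb Z_-}$, $\widetilde{\mathbf z}_t$ is this vector for $z_t$ and $\widehat{\mathbf z}_t:=\widetilde{\mathbf z}_{t-l}\otimes\cdots\otimes\widetilde{\mathbf z}_t\in T^{l+1}(\mathbb R^{p+1})$. A set $I_0\subset\{1,\dots,p+1\}$ with $1\in I_0$ and cardinality $>1$ is fixed, and $\widehat{\mathbf z}^0:=\sum_{i\in I_0}z^{i-1}\mathbf e_1\otimes\cdots\otimes\mathbf e_1\otimes\mathbf e_i$ ($l$ factors $\mathbf e_1$), with $\widehat{\mathbf z}^0_t$ the same expression for $z_t$. A state map $F$ has the echo state property (ESP) on inputs $K_M$ if for every $\mathbf z\in K_M$ there is a unique state sequence $(\mathbf x_t)_{t\in\mathbb Z_-}$ in the state space with $\mathbf x_t=F(\mathbf x_{t-1},z_t)$ for all $t$; the associated filter maps $\mathbf z$ to this sequence. The fading memory property (FMP) means continuity of the filter w.r.t. product topologies. $K_L$ denotes sequences with all terms of norm $\le L$. *)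

From HB Require Import structures.
From mathcomp Require Import all_boot all_order all_algebra.
From mathcomp Require Import all_classical all_reals all_analysis.
Unset Printing Implicit Defensive.
Import Order.TTheory GRing.Theory Num.Theory numFieldNormedType.Exports.
Local Open Scope ring_scope.
Local Open Scope classical_set_scope.

Section SigSAS.
Variables (R : realType) (p : nat).

(* multi-indices (i_1,...,i_n), each i_k in {0,...,p} (0-based: index k of the
   paper's e_{k+1}) *)
Definition idx (n : nat) := {ffun 'I_n -> 'I_p.+1}.

(* T^n(R^{p+1}) as arrays of coefficients, with the product (= norm) topology *)
Definition tensor (n : nat) := {ptws idx n -> R}.

Definition tnorm n (x : tensor n) : R := Num.sqrt (\sum_(i : idx n) x i ^+ 2).

Definition tsub n (x y : tensor n) : tensor n := fun i => x i - y i.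

(* order-lowering map pi_n : T^{n+1} -> T^n, keeps the coefficients whose first
   index is e_1 *)
Definition pi_low n (x : tensor n.+1) : tensor n :=
  fun i => x [ffun k : 'I_n.+1 =>
               match unlift ord0 k with Some k' => i k' | None => ord0 end].

Definition tens n (x : tensor n) (v : 'I_p.+1 -> R) : tensor n.+1 :=
  fun i => x [ffun k : 'I_n => i (widen_ord (leqnSn n) k)] * v (i ord_max).

Definition ztilde (z : R) : 'I_p.+1 -> R := fun i => z ^+ i.

Definition zhat0 (l : nat) (I0 : {set 'I_p.+1}) (z : R) : tensor l.+1 :=
  fun i => if [forall k : 'I_l, i (widen_ord (leqnSn l) k) == ord0]
              && (i ord_max \in I0)
           then z ^+ (i ord_max) else 0.

(* Input sequences (z_t)_{t in Z_-} are encoded as zz : nat -> R with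
   zz n = z_{-n}. *)

(* zhat_t = z~_{t-l} (x) ... (x) z~_t; the k-th factor (k = 0..l) is z~_{t-l+k},
   i.e. zz (n + (l - k)) when t = -n *)
Definition zhat (l : nat) (zz : nat -> R) (n : nat) : tensor l.+1 :=
  fun i => \prod_(k < l.+1) ztilde (zz (n + (l - k))%N) (i k).

Definition FSigSAS (lam : R) (l : nat) (I0 : {set 'I_p.+1})
  (x : tensor l.+1) (z : R) : tensor l.+1 :=
  fun i => lam * tens l (pi_low l x) (ztilde z) i + zhat0 l I0 z i.

(* Psi^(r) for Phi_j(z)_t, t = -n:  Psi^(0) = zhat0(z_{t-j}),
   Psi^(r) = pi(Psi^(r-1)) (x) z~_{t-j+r}, with z_{t-j+r} = zz (n + j - r) *)
Fixpoint Psi (l : nat) (I0 : {set 'I_p.+1}) (zz : nat -> R) (n j r : nat)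
  : tensor l.+1 :=
  match r with
  | 0 => zhat0 l I0 (zz (n + j)%N)
  | r'.+1 => tens l (pi_low l (Psi l I0 zz n j r')) (ztilde (zz (n + j - r'.+1)%N))
  end.

Definition Phi (l : nat) (I0 : {set 'I_p.+1}) (j : nat) (zz : nat -> R) (n : nat)
  : tensor l.+1 := Psi l I0 zz n j j.

Definition USigSAS (lam : R) (l : nat) (I0 : {set 'I_p.+1})
  (zz : {ptws nat -> R}) : {ptws nat -> tensor l.+1} :=
  fun n => fun i => lam ^+ l.+1 / (1 - lam) * zhat l zz n i
                    + \sum_(j < l.+1) lam ^+ j * Phi l I0 j zz n i.

End SigSAS.

Definition KM (R : realType) (M : R) : set {ptws nat -> R} :=
  [set zz | forall n, `|zz n| <= M].

(* Echo state property of the state map F with state space S on inputs K: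
   every input sequence admits a unique state sequence in S
   (x_t = F(x_{t-1}, z_t), i.e. xs n = F (xs n.+1) (zz n)). *)
Definition ESP {R : realType} {X : Type} (S : set X) (F : X -> R -> X)
  (K : set (nat -> R)) : Prop :=
  forall zz, K zz -> exists! xs : nat -> X,
    (forall n, S (xs n)) /\ (forall n, xs n = F (xs n.+1) (zz n)).

From HB Require Import structures.
From mathcomp Require Import all_boot all_order all_algebra.
From mathcomp Require Import all_classical all_reals all_analysis.
From mathcomp Require Import ring zify.
Import Order.TTheory GRing.Theory Num.Theory numFieldNormedType.Exports.
Local Open Scope ring_scope.
Local Open Scope classical_set_scope.

(* Proof outline.
   - Euclidean-norm facts for coefficient arrays over a finite index set
     (Cauchy-Schwarz, Minkowski, comparison with the l^1 norm), and a
     "backward contraction" lemma: a bounded-above sequence with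
     e_n <= q e_{n+1}, 0 <= q < 1, is nonpositive.
   - Norm estimates for the tensor operations: ||x (x) v|| = ||x|| ||v||,
     ||pi_l x|| <= ||x||, ||z~|| <= Mt and ||zhat0(z)|| <= Mt for |z| <= M.
     They give parts (1) and (2): F(., z) is (lam Mt)-Lipschitz and
     ||F(x, z)|| <= lam Mt ||x|| + Mt, so the ball of radius L is invariant.
   - Uniqueness of state sequences in the ball follows from (1) and the
     backward contraction lemma.
   - The explicit filter: Psi^(r) is an elementary tensor whose factors are
     read off a shifted word, so Phi_{j+1}(z)_t = pi_l(Phi_j(z)_{t-1}) (x) z~_t
     and Phi_j = zhat for j > l; hence U solves the state equation.  It is
     bounded, and the backward contraction lemma again puts it in the ball.
     Its coefficients are polynomials in finitely many z_s, whence the FMP. *)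

Section FiniteEuclidean.
Context {R : realType} {I : finType}.
Implicit Types (f g : I -> R).

Lemma sqrt_le_of_le_sqr (a b : R) : 0 <= b -> a <= b ^+ 2 -> Num.sqrt a <= b.
Proof.
move=> b0 ab; rewrite -(ger0_norm b0) -sqrtr_sqr ler_sqrt //; exact: sqr_ge0.
Qed.

Lemma sumr_sqr_ge0 f : 0 <= \sum_i f i ^+ 2.
Proof. by apply: sumr_ge0 => i _; exact: sqr_ge0. Qed.

Lemma sum_sqr_le_sqr_sum {f} : (forall i, 0 <= f i) -> \sum_i f i ^+ 2 <= (\sum_i f i) ^+ 2.
Proof.
move=> f0; rewrite expr2 big_distrl /=; apply: ler_sum => i _.
rewrite expr2 ler_wpM2l // (bigD1 i) //= lerDl.
by apply: sumr_ge0 => j _.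
Qed.

Lemma sqrt_sum_sqr_le_sum_norm f : Num.sqrt (\sum_i f i ^+ 2) <= \sum_i `|f i|.
Proof.
apply: sqrt_le_of_le_sqr; first by apply: sumr_ge0.
apply: le_trans _ (sum_sqr_le_sqr_sum (fun i => normr_ge0 (f i))).
by apply: ler_sum => i _; rewrite real_normK // num_real.
Qed.

(* Cauchy-Schwarz, from the nonnegativity of t |-> ||f + t g||^2. *)
Lemma cauchy_schwarz f g :
  (\sum_i f i * g i) ^+ 2 <= (\sum_i f i ^+ 2) * (\sum_i g i ^+ 2).
Proof.
set A := \sum_i f i ^+ 2; set B := \sum_i g i ^+ 2; set C := \sum_i f i * g i.
have quad_ge0 t : 0 <= A + 2 * t * C + t ^+ 2 * B.
  have -> : A + 2 * t * C + t ^+ 2 * B = \sum_i (f i + t * g i) ^+ 2.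
    rewrite /A /C /B mulr_sumr mulr_sumr -!big_split /=.
    by apply: eq_bigr => i _; ring.
  exact: sumr_sqr_ge0.
have [B0|B_neq0] := eqVneq B 0.
  have g0 i : g i = 0.
    apply/eqP; rewrite -sqrf_eq0.
    by rewrite (psumr_eq0P (fun i _ => sqr_ge0 (g i)) B0).
  rewrite /C big1 ?expr0n ?mulr_ge0 ?sumr_sqr_ge0 // => i _.
  by rewrite g0 mulr0.
have B_gt0 : 0 < B by rewrite lt_def B_neq0 sumr_sqr_ge0.
have := quad_ge0 (- C / B).
have -> : A + 2 * (- C / B) * C + (- C / B) ^+ 2 * B = A - C ^+ 2 / B.
  by field; rewrite gt_eqF.
by rewrite subr_ge0 ler_pdivrMr.
Qed.

Lemma minkowski f g :
  Num.sqrt (\sum_i (f i + g i) ^+ 2) <=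
  Num.sqrt (\sum_i f i ^+ 2) + Num.sqrt (\sum_i g i ^+ 2).
Proof.
set A := \sum_i f i ^+ 2; set B := \sum_i g i ^+ 2.
have A0 : 0 <= A := sumr_sqr_ge0 f; have B0 : 0 <= B := sumr_sqr_ge0 g.
apply: sqrt_le_of_le_sqr; first by rewrite addr_ge0 // sqrtr_ge0.
have -> : \sum_i (f i + g i) ^+ 2 = A + 2 * (\sum_i f i * g i) + B.
  rewrite /A /B mulr_sumr -!big_split /=; apply: eq_bigr => i _; ring.
have -> : (Num.sqrt A + Num.sqrt B) ^+ 2 = A + 2 * (Num.sqrt A * Num.sqrt B) + B.
  by rewrite sqrrD !sqr_sqrtr // -mulr_natr; ring.
rewrite lerD2r lerD2l ler_pM2l // -sqrtrM //.
apply: le_trans (ler_norm _) _; rewrite -sqrtr_sqr.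
exact/ler_wsqrtr/cauchy_schwarz.
Qed.

End FiniteEuclidean.

(* A sequence bounded above with e_n <= q e_{n+1}, 0 <= q < 1, is nonpositive:
   iterating gives e_n <= q^k sup e for every k. *)
Lemma nonpos_of_backward_contraction (R : realType) (e : nat -> R) (q B : R) :
  0 <= q -> q < 1 -> (forall n, e n <= q * e n.+1) -> (forall n, e n <= B) ->
  forall n, e n <= 0.
Proof.
move=> q0 q1 e_contr e_bnd.
set B' := Num.max B 0.
have B'0 : 0 <= B' by rewrite le_max lexx orbT.
have iter k n : e n <= q ^+ k * B'.
  elim: k n => [|k IH] n.
    by rewrite expr0 mul1r (le_trans (e_bnd n)) // le_max lexx.
  by rewrite (le_trans (e_contr n)) // exprS -mulrA ler_wpM2l.
move=> n; rewrite leNgt; apply/negP => en_gt0.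
have eps_gt0 : 0 < e n / (B' + 1) by rewrite divr_gt0 // ltr_pwDr.
have q_norm : `|q| < 1 by rewrite ger0_norm.
have /cvgrPdist_lt /(_ _ eps_gt0) [N _ qN] := cvg_expr q_norm.
have := qN N (leqnn N); rewrite /= sub0r normrN ger0_norm ?exprn_ge0 // => qN_small.
have : q ^+ N * B' < e n.
  apply: (@le_lt_trans _ _ (q ^+ N * (B' + 1))).
    by rewrite ler_wpM2l ?exprn_ge0 // lerDl.
  by rewrite -ltr_pdivlMr // ltr_pwDr.
by rewrite ltNge iter.
Qed.

Section TensorNorms.
Variables (R : realType) (p : nat).
Local Notation idx := (idx p).
Local Notation tensor := (tensor R p).
Local Notation Mt M := (\sum_(j < p.+1) M ^+ j).

(* Multi-indices of length n+1 are pairs (multi-index of length n, last index);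
   this is the index bijection behind x (x) v. *)
Definition idx_join n (ia : idx n * 'I_p.+1) : idx n.+1 :=
  [ffun k => if unlift ord_max k is Some k' then ia.1 k' else ia.2].
Definition idx_split n (i : idx n.+1) : idx n * 'I_p.+1 :=
  ([ffun k => i (widen_ord (leqnSn n) k)], i ord_max).
Arguments idx_join {n}.
Arguments idx_split {n}.

Lemma widen_ord_lift n (k : 'I_n) : widen_ord (leqnSn n) k = lift ord_max k.
Proof. by apply: val_inj; rewrite /= /bump leqNgt ltn_ord. Qed.

Lemma idx_joinK n : cancel (@idx_join n) idx_split.
Proof.
move=> [i a]; rewrite /idx_split /idx_join; congr (_, _).
  by apply/ffunP => k; rewrite !ffunE widen_ord_lift liftK.
by rewrite ffunE unlift_none.
Qed.

Lemma idx_splitK n : cancel (@idx_split n) idx_join.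
Proof.
move=> i; apply/ffunP => k; rewrite /idx_split /idx_join ffunE.
by case: unliftP => [k' ->|-> //]; rewrite /= ffunE widen_ord_lift.
Qed.

Lemma sum_sqr_tens n (x : tensor n) (v : 'I_p.+1 -> R) :
  \sum_i tens R p n x v i ^+ 2 = (\sum_i x i ^+ 2) * (\sum_a v a ^+ 2).
Proof.
transitivity (\sum_i (x (idx_split i).1 * v (idx_split i).2) ^+ 2).
  by apply: eq_bigr => i _; rewrite /tens.
rewrite (reindex idx_join); last first.
  by exists idx_split => i _; [exact: idx_joinK | exact: idx_splitK].
under eq_bigr do rewrite idx_joinK.
rewrite -(pair_big xpredT xpredT (fun i a => (x i * v a) ^+ 2)) /= big_distrl /=.
by apply: eq_bigr => i _; rewrite big_distrr; apply: eq_bigr => a _; rewrite exprMn.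
Qed.

Definition idx_cons0 n (i : idx n) : idx n.+1 :=
  [ffun k : 'I_n.+1 => if unlift ord0 k is Some k' then i k' else ord0].
Arguments idx_cons0 {n}.

Lemma idx_cons0_inj n : injective (@idx_cons0 n).
Proof.
move=> i1 i2 eq_i; apply/ffunP => k.
by have := congr1 (fun i : idx n.+1 => i (lift ord0 k)) eq_i; rewrite !ffunE liftK.
Qed.

Lemma sum_sqr_pi_low n (x : tensor n.+1) :
  \sum_i pi_low R p n x i ^+ 2 <= \sum_i x i ^+ 2.
Proof.
set A := (idx_cons0 @: [set: idx n])%SET.
have -> : \sum_i pi_low R p n x i ^+ 2 = \sum_(i in A) x i ^+ 2.
  rewrite big_imset /=; last by move=> ? ? _ _; exact: idx_cons0_inj.
  by apply: eq_big => [i|i _]; rewrite ?inE.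
rewrite [X in _ <= X](bigID (mem A)) /= lerDl.
by apply: sumr_ge0 => i _; exact: sqr_ge0.
Qed.

Lemma Mt_ge0 (M : R) : 0 <= M -> 0 <= Mt M.
Proof. by move=> M0; apply: sumr_ge0 => j _; exact: exprn_ge0. Qed.

Lemma norm_expr_le_Mt (M z : R) (a : 'I_p.+1) : `|z| <= M -> `|z ^+ a| <= Mt M.
Proof.
move=> zM; have M0 : 0 <= M by apply: le_trans zM.
rewrite normrX (le_trans (lerXn2r _ _ _ zM)) ?inE ?normr_ge0 //.
by rewrite (bigD1 a) //= lerDl; apply: sumr_ge0 => j _; exact: exprn_ge0.
Qed.

Lemma sum_sqr_ztilde {M z : R} : `|z| <= M ->
  \sum_a ztilde R p z a ^+ 2 <= Mt M ^+ 2.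
Proof.
move=> zM; have M0 : 0 <= M by apply: le_trans zM.
have -> : \sum_a ztilde R p z a ^+ 2 = \sum_(a < p.+1) `|z ^+ a| ^+ 2.
  by apply: eq_bigr => a _; rewrite real_normK // num_real.
apply: le_trans (sum_sqr_le_sqr_sum (fun a : 'I_p.+1 => normr_ge0 (z ^+ a))) _.
rewrite lerXn2r ?nnegrE ?Mt_ge0 ?sumr_ge0 //.
by apply: ler_sum => a _; rewrite normrX lerXn2r ?nnegrE.
Qed.

(* ||zhat0|| <= Mt M: zhat0 is e_1 (x) ... (x) e_1 (x) (z~ restricted to I0). *)
Lemma sum_sqr_zhat0 l (I0 : {set 'I_p.+1}) (M z : R) : `|z| <= M ->
  \sum_i zhat0 R p l I0 z i ^+ 2 <= Mt M ^+ 2.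
Proof.
move=> zM.
pose e1 : tensor l := fun i => ([forall k, i k == ord0])%:R.
pose w a : R := if a \in I0 then z ^+ a else 0.
have -> : \sum_i zhat0 R p l I0 z i ^+ 2 = \sum_i tens R p l e1 w i ^+ 2.
  apply: eq_bigr => i _; rewrite /tens /zhat0 /e1 /w.
  under eq_forallb do rewrite ffunE.
  by case: [forall k, _]; case: (_ \in I0); rewrite ?mul1r ?mul0r ?mulr0.
have e1_unit : \sum_i e1 i ^+ 2 = 1.
  rewrite (bigD1 [ffun=> ord0]) //= big1 ?addr0.
    by rewrite /e1; case: forallP => [_|[k]]; rewrite ?expr1n // ffunE.
  move=> i i_neq0; rewrite /e1; case: forallP => [i0|_]; last by rewrite expr0n.
  by case/eqP: i_neq0; apply/ffunP => k; rewrite ffunE; apply/eqP.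
rewrite sum_sqr_tens e1_unit mul1r (le_trans _ (sum_sqr_ztilde zM)) //.
by apply: ler_sum => a _; rewrite /w /ztilde; case: ifP => _; rewrite ?expr0n ?sqr_ge0.
Qed.

Lemma sum_sqr_shift l (M z : R) (x : tensor l.+1) : `|z| <= M ->
  \sum_i tens R p l (pi_low R p l x) (ztilde R p z) i ^+ 2 <=
  (Mt M * tnorm R p l.+1 x) ^+ 2.
Proof.
move=> zM; rewrite sum_sqr_tens exprMn mulrC sqr_sqrtr ?sumr_sqr_ge0 //.
by rewrite ler_pM ?sumr_sqr_ge0 ?sum_sqr_pi_low ?sum_sqr_ztilde.
Qed.

Lemma tnorm_ge0 n (x : tensor n) : 0 <= tnorm R p n x.
Proof. exact: sqrtr_ge0. Qed.

Lemma tnorm_sub_le n (x y : tensor n) :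
  tnorm R p n (tsub R p n x y) <= tnorm R p n x + tnorm R p n y.
Proof.
have := minkowski (fun i => x i) (fun i => - y i).
by under [\sum_i (- y i) ^+ 2]eq_bigr do rewrite sqrrN.
Qed.

Lemma tnorm_sub_eq0 n (x y : tensor n) : tnorm R p n (tsub R p n x y) <= 0 -> x = y.
Proof.
move=> xy0; apply: funext => i.
have sum0 : \sum_i tsub R p n x y i ^+ 2 = 0.
  apply/eqP; rewrite eq_le sumr_sqr_ge0 andbT.
  by rewrite -sqrtr_eq0 eq_le xy0 sqrtr_ge0.
have /eqP := psumr_eq0P (fun k _ => sqr_ge0 (tsub R p n x y k)) sum0 (i := i) isT.
by rewrite sqrf_eq0 subr_eq0 => /eqP.
Qed.

End TensorNorms.

Section StateMap.
Variables (R : realType) (p l : nat) (I0 : {set 'I_p.+1}).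
Local Notation tensor := (tensor R p l.+1).
Local Notation "|[ x ]|" := (tnorm R p l.+1 x).
Local Notation Mt M := (\sum_(j < p.+1) M ^+ j).
Local Notation F lam := (FSigSAS R p lam l I0).

(* Part (1): F(., z) is (lam Mt)-Lipschitz, since
   F x1 z - F x2 z = lam pi_low (x1 - x2) (x) z~. *)
Lemma F_lipschitz (lam M z : R) (x1 x2 : tensor) : 0 <= lam -> `|z| <= M ->
  |[tsub R p l.+1 (F lam x1 z) (F lam x2 z)]| <= lam * Mt M * |[tsub R p l.+1 x1 x2]|.
Proof.
move=> lam0 zM; have M0 : 0 <= M by apply: le_trans zM.
apply: sqrt_le_of_le_sqr; first by rewrite !mulr_ge0 ?Mt_ge0 ?tnorm_ge0.
have -> : \sum_i tsub R p l.+1 (F lam x1 z) (F lam x2 z) i ^+ 2 =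
    lam ^+ 2 * \sum_i tens R p l (pi_low R p l (tsub R p l.+1 x1 x2)) (ztilde R p z) i ^+ 2.
  by rewrite mulr_sumr; apply: eq_bigr => i _; rewrite /tsub /FSigSAS /tens /pi_low; ring.
by rewrite -mulrA exprMn ler_wpM2l ?sqr_ge0 ?sum_sqr_shift.
Qed.

Lemma F_affine_bound (lam M z : R) (x : tensor) : 0 <= lam -> `|z| <= M ->
  |[F lam x z]| <= lam * (Mt M * |[x]|) + Mt M.
Proof.
move=> lam0 zM; have M0 : 0 <= M by apply: le_trans zM.
apply: le_trans (minkowski _ _) _; apply: lerD.
  apply: sqrt_le_of_le_sqr; first by rewrite !mulr_ge0 ?Mt_ge0 ?tnorm_ge0.
  under eq_bigr do rewrite exprMn.
  by rewrite -mulr_sumr [X in _ <= X]exprMn ler_wpM2l ?sqr_ge0 ?sum_sqr_shift.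
by apply: sqrt_le_of_le_sqr; rewrite ?Mt_ge0 ?sum_sqr_zhat0.
Qed.

Lemma F_maps_ball (lam M z : R) (x : tensor) :
  0 <= lam -> 0 <= M -> lam * Mt M < 1 -> `|z| <= M ->
  |[x]| <= Mt M / (1 - lam * Mt M) -> |[F lam x z]| <= Mt M / (1 - lam * Mt M).
Proof.
move=> lam0 M0 contr zM xL; apply: le_trans (F_affine_bound lam M z x lam0 zM) _.
have -> : Mt M / (1 - lam * Mt M) = lam * (Mt M * (Mt M / (1 - lam * Mt M))) + Mt M.
  by field; rewrite subr_eq0 eq_sym lt_eqF.
by rewrite lerD2r ler_wpM2l // ler_wpM2l ?Mt_ge0.
Qed.

(* Part (3), uniqueness: two state sequences in the ball driven by the same
   input differ by e_n with e_n <= lam Mt e_{n+1}, so they coincide. *)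
Lemma bounded_solutions_unique (lam M : R) (zz : nat -> R) (xs ys : nat -> tensor) :
  0 <= lam -> (forall n, `|zz n| <= M) -> lam * Mt M < 1 ->
  (forall n, |[xs n]| <= Mt M / (1 - lam * Mt M)) ->
  (forall n, |[ys n]| <= Mt M / (1 - lam * Mt M)) ->
  (forall n, xs n = F lam (xs n.+1) (zz n)) ->
  (forall n, ys n = F lam (ys n.+1) (zz n)) ->
  xs = ys.
Proof.
move=> lam0 zM contr xs_ball ys_ball xs_sol ys_sol.
have M0 : 0 <= M by apply: le_trans (zM 0%N).
apply: funext => n; apply: tnorm_sub_eq0.
set L := Mt M / (1 - lam * Mt M).
apply: (@nonpos_of_backward_contraction _ (fun n => |[tsub R p l.+1 (xs n) (ys n)]|)
  (lam * Mt M) (L + L)); rewrite ?mulr_ge0 ?Mt_ge0 // => k.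
  by rewrite {1}xs_sol {1}ys_sol F_lipschitz.
by rewrite (le_trans (tnorm_sub_le _ _ _ (xs k) (ys k))) ?lerD.
Qed.

End StateMap.

Lemma prod_indicator (R : realType) (I : finType) (P : pred I) :
  \prod_i ((P i)%:R : R) = ([forall i, P i])%:R.
Proof.
case: forallP => [allP|]; first by rewrite big1 // => i _; rewrite allP.
move=> /forallP /forallPn [i Pi].
by rewrite (bigD1 i) //= (negbTE Pi) mul0r.
Qed.

Lemma continuous_into_ptws {T : topologicalType} {I : choiceType} {V : uniformType}
  (f : T -> {ptws I -> V}) : (forall i, continuous (fun x => f x i)) -> continuous f.
Proof.
move=> f_i x.
have := @pointwise_cvgP (discrete_topology I) V (f @ x) (f x) (fmap_filter _ (nbhs_filter x)).
by move=> [_ cvg_coords]; apply: cvg_coords => i; exact: f_i.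
Qed.

Lemma continuous_coord_expr (R : realType) (m a : nat) :
  continuous (fun g : {ptws nat -> R} => g m ^+ a).
Proof.
move=> g; apply: (@continuous_comp _ _ _ (fun g : {ptws nat -> R} => g m) (fun z => z ^+ a)).
  exact: proj_continuous.
exact: exprn_continuous.
Qed.

Section ExplicitFilter.
Variables (R : realType) (p l : nat) (I0 : {set 'I_p.+1}).
Hypothesis I0_e1 : ord0 \in I0.
Local Notation Psi := (Psi R p l I0).
Local Notation Phi := (Phi R p l I0).
Local Notation zhat := (zhat R p l).
Local Notation shift z x := (tens R p l (pi_low R p l x) (ztilde R p z)).

(* Psi^(r) is an elementary tensor: its k-th factor is entry k + r of the word
   whose entry m is e_1 for m < l, the I0-part of z~(zz s) for m = l, and
   z~(zz (s - (m - l))) for m > l; here s = n + j is the oldest input used,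
   and each application of pi_low (.) (x) z~ shifts the word by one slot. *)
Definition psi_factor (zz : nat -> R) (s m : nat) (a : 'I_p.+1) : R :=
  if (m <= l)%N then
    (if (m < l)%N then (a == ord0)%:R else if a \in I0 then zz s ^+ a else 0)
  else ztilde R p (zz (s - (m - l))%N) a.

Lemma Psi_prod (zz : nat -> R) n j r i :
  Psi zz n j r i = \prod_(k < l.+1) psi_factor zz (n + j) (k + r) (i k).
Proof.
elim: r i => [|r IH] i.
  rewrite /= /zhat0 big_ord_recr /= addn0.
  under eq_bigr => k _ do rewrite /psi_factor addn0 ltnW // ltn_ord.
  rewrite prod_indicator /psi_factor leqnn ltnn.
  by case: [forall k, _]; case: (i ord_max \in I0); rewrite ?mul1r ?mul0r.
rewrite /= /tens /pi_low IH big_ord_recl big_ord_recr /= ffunE unlift_none.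
have -> : psi_factor zz (n + j) (0 + r) ord0 = 1.
  by rewrite /psi_factor; do 2!case: leqP => _; rewrite ?eqxx ?I0_e1 /ztilde ?expr0.
rewrite mul1r; congr (_ * _).
  apply: eq_bigr => k _; rewrite ffunE liftK ffunE.
  by congr (psi_factor _ _ _ _); rewrite /bump /= add1n addSnnS.
by rewrite /psi_factor ifF ?addKn //; lia.
Qed.

Lemma Psi_shift (zz : nat -> R) n j r : Psi zz n j.+1 r = Psi zz n.+1 j r.
Proof. by elim: r => [|r IH] /=; rewrite ?IH addnS addSn. Qed.

(* For j > l every e_1 slot has been shifted out: Phi_j(z)_t = zhat_t. *)
Lemma Phi_tail (zz : nat -> R) n {j} : (l < j)%N -> Phi j zz n = zhat zz n.
Proof.
move=> lj; apply: funext => i; rewrite /Phi Psi_prod /zhat.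
apply: eq_bigr => k _; rewrite /psi_factor.
have -> : (k + j <= l)%N = false by apply/negbTE; rewrite -ltnNge; lia.
by have kl := ltn_ord k; congr (ztilde _ _ (zz _) _); lia.
Qed.

Lemma Phi_step (zz : nat -> R) n j :
  Phi j.+1 zz n = shift (zz n) (Phi j zz n.+1).
Proof. by rewrite /Phi /= Psi_shift addnK. Qed.

(* Applying pi_low (.) (x) z~_t maps Phi_j to Phi_{j+1} and zhat to zhat, and
   lam (lam^{l+1}/(1-lam)) + lam^{l+1} = lam^{l+1}/(1-lam). *)
Lemma USigSAS_fixed_point (lam : R) (zz : {ptws nat -> R}) n : lam < 1 ->
  USigSAS R p lam l I0 zz n = FSigSAS R p lam l I0 (USigSAS R p lam l I0 zz n.+1) (zz n).
Proof.
move=> lam_lt1; apply: funext => i.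
set c := lam ^+ l.+1 / (1 - lam).
have shift_U : shift (zz n) (USigSAS R p lam l I0 zz n.+1) i =
    c * zhat zz n i + \sum_(j < l.+1) lam ^+ j * Phi j.+1 zz n i.
  rewrite -(Phi_tail zz n (ltnW (ltnSn l.+1))) Phi_step (Phi_tail zz n.+1 (ltnSn l)).
  under [in RHS]eq_bigr do rewrite Phi_step.
  rewrite /tens /pi_low /USigSAS mulrDl big_distrl /= mulrA.
  by congr (_ + _); apply: eq_bigr => j _; rewrite mulrA.
have Phi0 : Phi 0 zz n = zhat0 R p l I0 (zz n) by rewrite /Phi /= addn0.
rewrite /FSigSAS shift_U /USigSAS -/c big_ord_recl big_ord_recr /= Phi0.
rewrite (Phi_tail zz n (ltnSn l)).
have -> : \sum_(j < l) lam ^+ (lift ord0 j) * Phi (lift ord0 j) zz n i =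
    lam * \sum_(j < l) lam ^+ j * Phi j.+1 zz n i.
  by rewrite mulr_sumr; apply: eq_bigr => j _; rewrite lift0 exprS mulrA.
have lam1 : 1 - lam != 0 by rewrite subr_eq0 eq_sym lt_eqF.
by rewrite /c exprS; field.
Qed.

Section Bounds.
Variables (M : R) (zz : {ptws nat -> R}).
Hypothesis zz_bnd : forall k, `|zz k| <= M.
Local Notation Mt := (\sum_(j < p.+1) M ^+ j).

Lemma M_ge0 : 0 <= M.
Proof. exact: le_trans (zz_bnd 0%N). Qed.

(* Each factor of Psi^(r) is e_1, a power z^a with a <= p, or 0. *)
Lemma psi_factor_bound s m a : `|psi_factor zz s m a| <= Mt.
Proof.
have Mt_ge1 : 1 <= Mt.
  by rewrite (bigD1 ord0) //= expr0 lerDl sumr_ge0 // => j _; rewrite exprn_ge0 ?M_ge0.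
rewrite /psi_factor /ztilde; case: (leqP m l) => _; last exact: norm_expr_le_Mt (zz_bnd _).
case: (ltnP m l) => _.
  by rewrite normr_nat; case: (a == ord0); rewrite ?Mt_ge0 ?M_ge0.
case: (a \in I0); first exact: norm_expr_le_Mt (zz_bnd _).
by rewrite normr0 Mt_ge0 ?M_ge0.
Qed.

Lemma Psi_coord_bound n j r i : `|Psi zz n j r i| <= Mt ^+ l.+1.
Proof.
have -> : Mt ^+ l.+1 = \prod_(k < l.+1) Mt by rewrite prodr_const card_ord.
rewrite Psi_prod normr_prod.
by apply: ler_prod => k _; rewrite normr_ge0 psi_factor_bound.
Qed.

Lemma USigSAS_bounded (lam : R) : 0 < lam -> lam < 1 ->
  exists B, forall n, tnorm R p l.+1 (USigSAS R p lam l I0 zz n) <= B.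
Proof.
move=> lam_gt0 lam_lt1.
set c := lam ^+ l.+1 / (1 - lam).
have c_ge0 : 0 <= c by rewrite divr_ge0 ?exprn_ge0 ?subr_ge0 ?ltW.
exists (\sum_(i : idx p l.+1)
  (c * Mt ^+ l.+1 + \sum_(j < l.+1) lam ^+ j * Mt ^+ l.+1)) => n.
apply: le_trans (sqrt_sum_sqr_le_sum_norm _) _; apply: ler_sum => i _.
apply: le_trans (ler_normD _ _) _; apply: lerD.
  rewrite normrM ger0_norm //; apply: ler_wpM2l => //.
  by rewrite -(Phi_tail zz n (ltnSn l)) Psi_coord_bound.
apply: le_trans (ler_norm_sum _ _ _) _; apply: ler_sum => j _.
have lamj_ge0 : 0 <= lam ^+ j by rewrite exprn_ge0 // ltW.
by rewrite normrM ger0_norm //; apply: ler_wpM2l; rewrite ?Psi_coord_bound.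
Qed.

(* The explicit filter takes values in the ball of radius L: with
   e_n = ||U_n|| - L, the affine bound on F gives e_n <= lam Mt e_{n+1}. *)
Lemma USigSAS_in_ball (lam : R) : 0 < lam -> lam < 1 -> lam * Mt < 1 ->
  forall n, tnorm R p l.+1 (USigSAS R p lam l I0 zz n) <= Mt / (1 - lam * Mt).
Proof.
move=> lam_gt0 lam_lt1 contr n.
have [B U_bnd] := USigSAS_bounded lam lam_gt0 lam_lt1.
set L := Mt / (1 - lam * Mt).
have contr0 : 1 - lam * Mt != 0 by rewrite subr_eq0 eq_sym lt_eqF.
have contr_ge0 : 0 <= lam * Mt by rewrite mulr_ge0 ?Mt_ge0 ?M_ge0 // ltW.
rewrite -subr_le0.
apply: (@nonpos_of_backward_contraction _
  (fun n => tnorm R p l.+1 (USigSAS R p lam l I0 zz n) - L) (lam * Mt) (B - L)) => // k;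
  last by rewrite lerB.
rewrite {1}(USigSAS_fixed_point lam zz k lam_lt1).
set u := tnorm R p l.+1 (USigSAS R p lam l I0 zz k.+1).
have -> : lam * Mt * (u - L) = lam * (Mt * u) + Mt - L by rewrite /L; field.
by rewrite lerB // (F_affine_bound R p l I0 lam M (zz k) _ (ltW lam_gt0) (zz_bnd k)).
Qed.

End Bounds.

Lemma continuous_psi_factor s m a :
  continuous (fun g : {ptws nat -> R} => psi_factor g s m a).
Proof.
rewrite /psi_factor /ztilde; case: (leqP m l) => _; last exact: continuous_coord_expr.
case: (ltnP m l) => _; first exact: cst_continuous.
by case: (a \in I0); [exact: continuous_coord_expr | exact: cst_continuous].
Qed.

Lemma continuous_zhat_coord n i :
  continuous (fun g : {ptws nat -> R} => zhat g n i).
Proof.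
by apply: continuous_big => // [|k _]; [exact: mul_continuous | exact: continuous_coord_expr].
Qed.

Lemma continuous_Phi_coord j n i :
  continuous (fun g : {ptws nat -> R} => Phi j g n i).
Proof.
rewrite (_ : (fun g => _) = fun g => \prod_(k < l.+1) psi_factor g (n + j) (k + j) (i k)).
  apply: continuous_big => // [|k _]; first exact: mul_continuous.
  exact: continuous_psi_factor.
by apply: funext => g; rewrite /Phi Psi_prod.
Qed.

(* Part (3), fading memory: each coefficient of U(z)_t is a polynomial in
   finitely many z_s, hence U is continuous for the product topologies. *)
Lemma continuous_USigSAS (lam : R) : continuous (USigSAS R p lam l I0).
Proof.
apply: continuous_into_ptws => n; apply: continuous_into_ptws => i zz.
apply: (@cvgD _ _ _ _ (nbhs_filter zz) (fun g => lam ^+ l.+1 / (1 - lam) * zhat g n i)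
  (fun g => \sum_(j < l.+1) lam ^+ j * Phi j g n i)).
  by apply: cvgMl_tmp; exact: continuous_zhat_coord.
apply: cvg_big => // [|j _]; first exact: add_continuous.
by apply: cvgMl_tmp; exact: continuous_Phi_coord.
Qed.

End ExplicitFilter.

Theorem mainTheorem2 (R : realType) (M : R) (l p : nat) (lam : R)
  (I0 : {set 'I_p.+1}) :
  0 < M -> ord0 \in I0 -> (1 < #|I0|)%N ->
  0 < lam -> lam < 1 -> lam * (\sum_(j < p.+1) M ^+ j) < 1 ->
  let Mt := \sum_(j < p.+1) M ^+ j in
  let L := Mt / (1 - lam * Mt) in
  let F := FSigSAS R p lam l I0 in
  (* (1) contraction *)
  ((forall (x1 x2 : tensor R p l.+1) (z : R), `|z| <= M ->
      tnorm R p l.+1 (tsub R p l.+1 (F x1 z) (F x2 z)) <= lam * Mt * tnorm R p l.+1 (tsub R p l.+1 x1 x2))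
   /\ lam * Mt < 1)
  (* (2) the closed ball of radius L is invariant *)
  /\ (forall (x : tensor R p l.+1) (z : R), tnorm R p l.+1 x <= L -> `|z| <= M ->
        tnorm R p l.+1 (F x z) <= L)
  (* (3) ESP on K_M (state space: closed ball of radius L), the filter is
     U^SigSAS, it takes values in K_L, and it has the FMP *)
  /\ ESP [set x : tensor R p l.+1 | tnorm R p l.+1 x <= L] F (KM R M)
  /\ (forall zz, KM R M zz ->
        (forall n, tnorm R p l.+1 (USigSAS R p lam l I0 zz n) <= L) /\
        (forall n, USigSAS R p lam l I0 zz n = F (USigSAS R p lam l I0 zz n.+1) (zz n)))
  /\ {within KM R M, continuous (USigSAS R p lam l I0)}.
Proof.
move=> M_gt0 I0_e1 _ lam_gt0 lam_lt1 contr Mt L F.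
have U_solves zz : KM R M zz ->
    (forall n, tnorm R p l.+1 (USigSAS R p lam l I0 zz n) <= L) /\
    (forall n, USigSAS R p lam l I0 zz n = F (USigSAS R p lam l I0 zz n.+1) (zz n)).
  move=> zz_bnd; split => n; first exact: USigSAS_in_ball.
  exact: USigSAS_fixed_point.
split; first by split => // x1 x2 z; exact: F_lipschitz (ltW lam_gt0).
split; first by move=> x z x_ball zM; exact: F_maps_ball (ltW lam_gt0) (ltW M_gt0) contr zM x_ball.
split.
  move=> zz zz_bnd; exists (USigSAS R p lam l I0 zz); split; first exact: U_solves.
  move=> ys [ys_ball ys_sol]; have [U_ball U_sol] := U_solves zz zz_bnd.
  exact: bounded_solutions_unique (ltW lam_gt0) zz_bnd contr U_ball ys_ball U_sol ys_sol.
split; first exact: U_solves.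
exact/continuous_subspaceT/continuous_USigSAS.
Qed.
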